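(* Let $G$ and $H$ be connected graphs of order at least two such that neither $G$ nor $H$ is a complete graph, and suppose $\textnormal{diam}(G\diamond H)=3$. (a) If $\{g,g'\}$ is a $\gamma_G$-pair and $\{h,h'\}$ is a $\gamma_H$-pair, then $O_{\rm SR}(G\diamond H)=\mathcal{B}$. (b) If $G$ has at least two distinct universal vertices and $\textnormal{diam}(H)\ge 3$, then $O_{\rm SR}(G\diamond H)=\mathcal{B}$. (c) Suppose $G$ has no $\gamma_G$-pair and no universal vertex, but $G$ has a pair of distinct adjacent twins and $H$ has a $\gamma_H$-pair. Then $O_{\rm SR}(G\diamond H)=\mathcal{B}$. (d) Suppose $G$ has no $\gamma_G$-pair and no universal vertex, and $H$ has a $\gamma_H$-pair and at least two distinct vertices of $H$ belong to no $\gamma_H$-pair. Then $O_{\rm SR}(G\diamond H)=\mathcal{B}$. (e) Suppose $G$ has no $\gamma_G$-pair and no universal vertex, and $H$ has distinct adjacent twins $h_1,h_2$ such that both $\{h_1,h\}$ and $\{h_2,h\}$ are $\gamma_H$-pairs for some $h\in V(H)\setminus\{h_1,h_2\}$. Then $O_{\rm SR}(G\diamond H)=\mathcal{B}$.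
   Context: All graphs are finite, simple and undirected; $\overline{X}$ denotes the complement of $X$; $\textnormal{diam}$ denotes diameter; $N_X[x]=N_X(x)\cup\{x\}$. A universal vertex of $X$ is a vertex adjacent to all other vertices. Distinct vertices $u,w$ are adjacent twins if $N[u]=N[w]$. A set $D$ is a dominating set of $X$ if $\bigcup_{x\in D}N[x]=V(X)$. A pair $\{u,w\}$ is a $\gamma_X$-pair if $\{u,w\}$ is a minimum dominating set of $X$ with $N_X[u]\cap N_X[w]=\emptyset$ and $N_X[u]\cup N_X[w]=V(X)$. The modular product $G\diamond H$ has vertex set $V(G)\times V(H)$, and $(g,h)$, $(g',h')$ are adjacent iff one of the following holds: ($g=g'$ and $hh'\in E(H)$), or ($h=h'$ and $gg'\in E(G)$), or ($gg'\in E(G)$ and $hh'\in E(H)$), or ($gg'\in E(\overline{G})$ and $hh'\in E(\overline{H})$). A set $S\subseteq V(X)$ is a strong resolving set of a connected graph $X$ if for all distinct $x,y\in V(X)$ there exists $z\in S$ such that $x$ lies on a $y$–$z$ geodesic or $y$ lies on an $x$–$z$ geodesic. The Maker–Breaker strong resolving game on $X$: Maker and Breaker alternately select a not-yet-chosen vertex of $X$; Maker wins if the vertices he selects contain a strong resolving set of $X$, Breaker wins otherwise. In the M-game Maker moves first, in the B-game Breaker moves first. $O_{\rm SR}(X)=\mathcal{M}$ if Maker has a winning strategy in both games, $\mathcal{B}$ if Breaker has a winning strategy in both, and $\mathcal{N}$ if the first player has a winning strategy in each. *)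

From mathcomp Require Import all_boot.
Set Implicit Arguments. Unset Strict Implicit. Unset Printing Implicit Defensive.

Section Graphs.
Variables (T : finType) (e : rel T).

Definition simple_graph : Prop := symmetric e /\ irreflexive e.

Definition connected_graph : Prop := forall x y : T, connect e x y.

Definition complete_graph : Prop := forall x y : T, x != y -> e x y.

Definition cnbhd (x : T) : {set T} := x |: [set y | e x y].

(* distance: least length of an x-y walk (walks shorter than |V| suffice);
   defaults to #|T| if y is unreachable from x *)
Definition dist (x y : T) : nat :=
  \big[minn/#|T|]_(k < #|T| | [exists p : k.-tuple T, path e x p && (last x p == y)]) (k : nat).

Definition diam : nat := \max_(x : T) \max_(y : T) dist x y.

Definition on_geodesic (a b x : T) : Prop :=
  exists p : seq T, [/\ path e a p, last a p = b, size p = dist a b & x \in a :: p].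

Definition strong_resolving (S : {set T}) : Prop :=
  forall x y : T, x != y ->
    exists2 z, z \in S & (on_geodesic y z x \/ on_geodesic x z y).

Definition universal (u : T) : Prop := forall x : T, x != u -> e u x.

Definition adjacent_twins (u w : T) : Prop := u != w /\ cnbhd u = cnbhd w.

Definition dominating (D : {set T}) : Prop := \bigcup_(x in D) cnbhd x = [set: T].

Definition min_dominating (D : {set T}) : Prop :=
  dominating D /\ forall D' : {set T}, dominating D' -> #|D| <= #|D'|.

Definition gamma_pair (u w : T) : Prop :=
  [/\ min_dominating [set u; w], cnbhd u :&: cnbhd w = set0 &
      cnbhd u :|: cnbhd w = [set: T]].

End Graphs.

Definition modprod (T1 T2 : finType) (e1 : rel T1) (e2 : rel T2) : rel (T1 * T2) :=
  fun p q =>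
    let: (g, h) := p in let: (g', h') := q in
    [|| (g == g') && e2 h h', (h == h') && e1 g g', e1 g g' && e2 h h'
      | [&& g != g', ~~ e1 g g', h != h' & ~~ e2 h h'] ].

(* Maker-Breaker strong resolving game.  Positions: M = Maker's vertices,
   B = Breaker's vertices; the game ends when no vertex is free. *)
Section Game.
Variables (T : finType) (e : rel T).

Definition maker_goal (M : {set T}) : Prop :=
  exists2 S : {set T}, S \subset M & strong_resolving e S.

(* Maker has a winning strategy from (M, B) with [maker_turn] to move;
   n is fuel (number of remaining moves, #|T| suffices). *)
Fixpoint maker_wins (n : nat) (M B : {set T}) (maker_turn : bool) : Prop :=
  match n with
  | 0 => maker_goal M
  | n'.+1 =>
      if ~: (M :|: B) == set0 then maker_goal M else
      if maker_turn then exists2 v, v \in ~: (M :|: B) & maker_wins n' (v |: M) B false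
      else forall v, v \in ~: (M :|: B) -> maker_wins n' M (v |: B) true
  end.

Fixpoint breaker_wins (n : nat) (M B : {set T}) (maker_turn : bool) : Prop :=
  match n with
  | 0 => ~ maker_goal M
  | n'.+1 =>
      if ~: (M :|: B) == set0 then ~ maker_goal M else
      if maker_turn then forall v, v \in ~: (M :|: B) -> breaker_wins n' (v |: M) B false
      else exists2 v, v \in ~: (M :|: B) & breaker_wins n' M (v |: B) true
  end.

(* O_SR(X) = B : Breaker wins both the M-game and the B-game. *)
Definition outcome_SR_B : Prop :=
  breaker_wins #|T| set0 set0 true /\ breaker_wins #|T| set0 set0 false.

End Game.

(* Call u and v mutually eccentric when each is at maximum distance from the
   other among all vertices.  Such a pair meets every strong resolving set: if z
   strongly resolves u and v, one of them lies strictly inside a geodesic from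
   the other one to z, which is then even farther away.  Hence Breaker wins both
   games as soon as, for every vertex v, some c <> v has two mutually eccentric
   partners distinct from v: Breaker claims c, and whatever Maker claims next,
   one of the two partners is still free for Breaker.
   In the modular product, (x, y) lies in N[(a, b)] iff [x \in N[a]] = [y \in N[b]].
   Since the diameter is 3, two vertices with disjoint closed neighbourhoods are
   mutually eccentric; in any graph, so are two non-adjacent vertices whose
   closed neighbourhoods meet every closed neighbourhood.  Under each hypothesis this
   produces a 4-cycle of mutually eccentric pairs, or in (e) the forks directly. *)

From mathcomp Require Import all_boot all_order zify.
Set Implicit Arguments. Unset Strict Implicit. Unset Printing Implicit Defensive.
Import Order.TTheory.

Section Distance.
Variables (T : finType) (e : rel T).

Lemma cnbhd_refl u : u \in cnbhd e u.
Proof. exact: setU11. Qed.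

Lemma dist_le_card a b : dist e a b <= #|T|.
Proof. by rewrite /dist -minEnat -leEnat; apply: bigmin_le_id. Qed.

Lemma dist_le_size a p : path e a p -> dist e a (last a p) <= size p.
Proof.
move=> pap; have [ltpT|] := ltnP (size p) #|T|; last exact: leq_trans (dist_le_card _ _).
rewrite /dist -minEnat -leEnat; apply: (bigmin_inf (Ordinal ltpT)) => //.
by apply/existsP; exists (in_tuple p); rewrite pap eqxx.
Qed.

Lemma leq_dist m a b : m <= #|T| ->
  (forall p, path e a p -> last a p = b -> m <= size p) -> m <= dist e a b.
Proof.
move=> mT minp; rewrite /dist -minEnat -leEnat; apply: le_bigmin => // k.
by case/existsP=> p /andP[pap /eqP lastp]; rewrite leEnat -(size_tuple p) minp.
Qed.

Lemma dist_le_diam a b : dist e a b <= diam e.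
Proof.
apply: leq_trans (leq_bigmax a).
exact: (leq_bigmax (F := fun y => dist e a y) b).
Qed.

Lemma on_geodesic_dist_lt a b x :
  on_geodesic e a b x -> x != b -> dist e a x < dist e a b.
Proof.
case=> p [pap lastp <- xp]; move: pap lastp; case/splitPl: xp => p1 p2 lastp1.
rewrite cat_path last_cat size_cat => /andP[pap1 _] lastp xb.
rewrite -lastp1 -addn1 leq_add ?dist_le_size // lt0n size_eq0.
by apply: contraNneq xb => p2nil; rewrite -lastp p2nil lastp1.
Qed.

Lemma dist_ge2 a b : b \notin cnbhd e a -> 2 <= dist e a b.
Proof.
move=> bNa; have ab : a != b by apply: contraNneq bNa => <-; rewrite cnbhd_refl.
apply: leq_dist => [|[|z [|? ?]] //=]; first by apply/card_gt1P; exists a, b.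
- by move=> _ ba; rewrite ba eqxx in ab.
- by rewrite andbT => az zb; rewrite -zb !inE az orbT in bNa.
Qed.

Hypothesis esym : symmetric e.

Lemma mem_cnbhdC a b : (a \in cnbhd e b) = (b \in cnbhd e a).
Proof. by rewrite !inE eq_sym esym. Qed.

Lemma dist_le2 a b z : z \in cnbhd e a -> z \in cnbhd e b -> dist e a b <= 2.
Proof.
have walk p : path e a p -> last a p = b -> size p <= 2 -> dist e a b <= 2.
  by move=> pap <-; apply: leq_trans (dist_le_size pap).
rewrite !inE => /predU1P[-> | az] /predU1P[ab | bz].
- exact: (walk [::]).
- by apply: (walk [:: b]); rewrite //= esym bz.
- by apply: (walk [:: b]); rewrite //= -ab az.
- by apply: (walk [:: z; b]); rewrite //= az esym bz.
Qed.

Lemma dist_ge3 a b : 3 <= #|T| -> cnbhd e a :&: cnbhd e b = set0 -> 3 <= dist e a b.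
Proof.
move=> T3 disj; have meet z : z \in cnbhd e a -> z \in cnbhd e b -> False.
  by move=> za zb; have := in_set0 z; rewrite -disj inE za zb.
apply: leq_dist => // -[|z [|z' [|? ?]]] //=.
- by move=> _ ab; subst b; case: (meet a); apply: cnbhd_refl.
- by rewrite andbT => az zb; subst b; case: (meet z); rewrite ?cnbhd_refl // !inE az orbT.
- rewrite andbT => /andP[az zz'] z'b; subst b; case: (meet z).
    by rewrite !inE az orbT.
  by rewrite mem_cnbhdC !inE zz' orbT.
Qed.

Lemma exists_disjoint_cnbhd : 3 <= diam e ->
  exists a b, cnbhd e a :&: cnbhd e b = set0.
Proof.
move=> diam3.
case: (pickP [pred ab : T * T | cnbhd e ab.1 :&: cnbhd e ab.2 == set0]) => [[a b] /eqP|meet].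
  by exists a, b.
suff : diam e <= 2 by lia.
apply/bigmax_leqP=> a _; apply/bigmax_leqP=> b _.
have /set0Pn[z] := negbT (meet (a, b)).
by rewrite inE => /andP[]; apply: dist_le2.
Qed.

End Distance.

Section MutuallyEccentric.
Variables (T : finType) (e : rel T).

Definition mutually_eccentric (u v : T) : Prop :=
  u != v /\ forall z, dist e u z <= dist e u v /\ dist e v z <= dist e v u.

Lemma mutually_eccentric_neq u v : mutually_eccentric u v -> u != v.
Proof. by case. Qed.

Lemma mutually_eccentricC u v : mutually_eccentric u v -> mutually_eccentric v u.
Proof. by case=> uv far; split=> [|z]; rewrite 1?eq_sym // and_comm. Qed.

Lemma mutually_eccentric_on_geodesic u v z :
  mutually_eccentric u v -> on_geodesic e v z u -> u = z.
Proof.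
case=> _ far /on_geodesic_dist_lt; case: (eqVneq u z) => // _ /(_ isT).
by rewrite ltnNge (proj2 (far z)).
Qed.

Lemma strong_resolving_mutually_eccentric S u v :
  strong_resolving e S -> mutually_eccentric u v -> (u \in S) || (v \in S).
Proof.
move=> resS uv; have [z zS [] /mutually_eccentric_on_geodesic] := resS u v (proj1 uv).
  by move=> /(_ uv) ->; rewrite zS.
by move=> /(_ (mutually_eccentricC uv)) ->; rewrite zS orbT.
Qed.

Hypothesis esym : symmetric e.

Lemma mutually_eccentric_of_nonadjacent u v : v \notin cnbhd e u ->
  (forall z, cnbhd e u :&: cnbhd e z != set0) ->
  (forall z, cnbhd e v :&: cnbhd e z != set0) -> mutually_eccentric u v.
Proof.
move=> vNu closeu closev; split=> [|z].
  by apply: contraNneq vNu => <-; apply: cnbhd_refl.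
have dist2 x y : cnbhd e x :&: cnbhd e y != set0 -> dist e x y <= 2.
  by case/set0Pn=> w; rewrite inE => /andP[]; apply: dist_le2.
split; apply: leq_trans (dist2 _ _ _) (dist_ge2 _) => //.
by rewrite mem_cnbhdC.
Qed.

Hypotheses (diam3 : diam e <= 3) (card3 : 3 <= #|T|).

Lemma mutually_eccentric_of_disjoint u v :
  cnbhd e u :&: cnbhd e v = set0 -> mutually_eccentric u v.
Proof.
move=> disj; split=> [|z].
  by apply/eqP=> uv; have := in_set0 u; rewrite -disj -uv inE cnbhd_refl.
have far x y : cnbhd e x :&: cnbhd e y = set0 -> dist e x z <= dist e x y.
  by move=> xy; apply: leq_trans (dist_le_diam _ _ _) (leq_trans diam3 (dist_ge3 esym card3 xy)).
by split; apply: far; rewrite // setIC.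
Qed.

End MutuallyEccentric.

Section Game.
Variables (T : finType) (e : rel T).
Local Notation eccentric := (mutually_eccentric e).
Implicit Types (M B : {set T}).

Lemma not_maker_goal M u v :
  eccentric u v -> u \notin M -> v \notin M -> ~ maker_goal e M.
Proof.
move=> uv uM vM [S /subsetP SM /strong_resolving_mutually_eccentric/(_ uv)].
by case/orP=> /SM; apply/negP.
Qed.

Lemma breaker_wins_owning_pair n M B t u v : eccentric u v ->
  u \in B -> v \in B -> u \notin M -> v \notin M -> breaker_wins e n M B t.
Proof.
move=> uv; elim: n M B t => [|n IHn] M B t uB vB uM vM /=.
  exact: not_maker_goal uv uM vM.
case: ifP => [_|/negbT/set0Pn[w wfree]]; first exact: not_maker_goal uv uM vM.
case: t => [x|]; last by exists w; last apply: IHn; rewrite // !inE ?uB ?vB orbT.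
rewrite !inE negb_or => /andP[xM xB].
by apply: IHn; rewrite // !inE negb_or ?uM ?vM andbT; [move: uB | move: vB];
  apply: contraTneq => ->.
Qed.

Lemma breaker_wins_claim n M B v : v \in ~: (M :|: B) ->
  breaker_wins e n M (v |: B) true -> breaker_wins e n.+1 M B false.
Proof. by move=> vfree win /=; rewrite ifN; [exists v | apply/set0Pn; exists v]. Qed.

Lemma breaker_wins_all_moves n M B : (exists v, v \in ~: (M :|: B)) ->
  (forall v, v \in ~: (M :|: B) -> breaker_wins e n (v |: M) B false) ->
  breaker_wins e n.+1 M B true.
Proof. by move=> /set0Pn free win /=; rewrite ifN. Qed.

Lemma breaker_wins_fork n M B c l1 l2 :
  eccentric c l1 -> eccentric c l2 -> l1 != l2 ->
  c \notin M :|: B -> l1 \notin M :|: B -> l2 \notin M :|: B ->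
  breaker_wins e n.+3 M B false.
Proof.
move=> cl1 cl2 l12; rewrite !inE !negb_or.
move=> /andP[/negbTE cM /negbTE cB] /andP[/negbTE l1M /negbTE l1B] /andP[l2M l2B].
have l1c : l1 == c = false by rewrite eq_sym (negbTE (mutually_eccentric_neq cl1)).
apply: (breaker_wins_claim (v := c)); first by rewrite !inE cM cB.
apply: breaker_wins_all_moves => [|w]; first by exists l1; rewrite !inE l1M l1B l1c.
rewrite !inE !negb_or => /and3P[wM wc wB].
pose l := if w == l1 then l2 else l1.
have cl : eccentric c l by rewrite /l; case: ifP.
have lc : l == c = false by rewrite eq_sym (negbTE (mutually_eccentric_neq cl)).
have lw : l == w = false.
  by rewrite /l; case: (eqVneq w l1) => [->|]; rewrite eq_sym ?(negbTE l12) // => /negbTE.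
have [lM lB] : l \in M = false /\ l \in B = false.
  by rewrite /l; case: ifP; rewrite ?l1M ?l1B ?(negbTE l2M) ?(negbTE l2B).
apply: (breaker_wins_claim (v := l)); first by rewrite !inE lw lM lc lB.
by apply: (breaker_wins_owning_pair _ _ cl); rewrite !inE ?eqxx ?orbT ?cM ?lM ?lw // orbF eq_sym.
Qed.

Definition eccentric_fork (v c l1 l2 : T) : Prop :=
  [/\ eccentric c l1, eccentric c l2, l1 != l2 & v \notin [:: c; l1; l2]].

Lemma eccentric_fork_card_gt3 v c l1 l2 : eccentric_fork v c l1 l2 -> 3 < #|T|.
Proof.
case=> /mutually_eccentric_neq cl1 /mutually_eccentric_neq cl2 l12.
rewrite !inE !negb_or => /and3P[vc vl1 vl2].
have /card_uniqP card4 : uniq [:: v; c; l1; l2].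
  by rewrite /= !inE !negb_or vc vl1 vl2 cl1 cl2 l12.
by rewrite -[4]/(size [:: v; c; l1; l2]) -card4 max_card.
Qed.

Lemma outcome_SR_B_of_forks : 0 < #|T| ->
  (forall v, exists c l1 l2, eccentric_fork v c l1 l2) -> outcome_SR_B e.
Proof.
case/card_gt0P=> v0 _ forks; have [c [l1 [l2 fork0]]] := forks v0.
rewrite /outcome_SR_B; have [n ->] : exists n, #|T| = n.+4.
  by exists (#|T| - 4); have := eccentric_fork_card_gt3 fork0; lia.
split; last first.
  by case: fork0 => cl1 cl2 l12 _; apply: breaker_wins_fork cl1 cl2 l12 _ _ _; rewrite !inE.
apply: breaker_wins_all_moves => [|v _]; first by exists v0; rewrite !inE.
have [c' [l1' [l2' [cl1 cl2 l12]]]] := forks v.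
rewrite !inE !negb_or => /and3P[vc vl1 vl2].
by apply: breaker_wins_fork cl1 cl2 l12 _ _ _; rewrite !inE !orbF eq_sym.
Qed.

Lemma outcome_SR_B_of_eccentric_cycle a b c d :
  eccentric a b -> eccentric b c -> eccentric c d -> eccentric d a ->
  a != c -> b != d -> outcome_SR_B e.
Proof.
move=> ab bc cd da ac bd; apply: outcome_SR_B_of_forks; first by apply/card_gt0P; exists a.
have fork v x l1 l2 : eccentric x l1 -> eccentric x l2 -> l1 != l2 ->
    v != x -> v != l1 -> v != l2 -> exists x l1 l2, eccentric_fork v x l1 l2.
  by move=> xl1 xl2 l12 vx vl1 vl2; exists x, l1, l2; split; rewrite // !inE !negb_or vx vl1 vl2.
have [ba cb ad] := And3 (mutually_eccentricC ab) (mutually_eccentricC bc) (mutually_eccentricC da).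
have [nab nbc ncd nda] := And4 (mutually_eccentric_neq ab) (mutually_eccentric_neq bc)
  (mutually_eccentric_neq cd) (mutually_eccentric_neq da).
move=> v; case: (eqVneq v a) => [->|va].
  by apply: fork cb cd bd ac nab _; rewrite eq_sym.
case: (eqVneq v b) => [->|vb].
  by apply: fork da (mutually_eccentricC cd) ac bd _ nbc; rewrite eq_sym.
case: (eqVneq v c) => [->|vc]; last exact: fork ba bc ac vb va vc.
by apply: fork ab ad bd _ _ ncd; rewrite eq_sym.
Qed.

End Game.

Section Neighbourhoods.
Variables (T : finType) (e : rel T).

Lemma universalP u : universal e u <-> cnbhd e u = [set: T].
Proof.
split=> [univ | full x xu]; first by apply/setP=> x; rewrite !inE; case: eqP => // /eqP/univ.
by have := in_setT x; rewrite -full !inE (negbTE xu).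
Qed.

Lemma universalPn u : ~ universal e u -> exists x, x \notin cnbhd e u.
Proof.
move=> nuniv; case: (pickP [pred x | x \notin cnbhd e u]) => [x|full]; first by exists x.
by case: nuniv; apply/universalP/setP=> x; have := full x; rewrite !inE => /negbFE ->.
Qed.

Lemma gamma_pair_cnbhdC u w : gamma_pair e u w -> cnbhd e w = ~: cnbhd e u.
Proof.
case=> _ /setP disj /setP cover; apply/setP=> x; move: (disj x) (cover x).
by rewrite in_setC in_setI in_setU in_set0 in_setT; case: (x \in cnbhd e u).
Qed.

Lemma gamma_pair_neq u w : gamma_pair e u w -> u != w.
Proof.
move/gamma_pair_cnbhdC=> compl; apply/eqP=> uw.
by have := cnbhd_refl e u; rewrite {2}uw compl inE cnbhd_refl.
Qed.

Lemma gamma_pair_of_cnbhdC u w : (forall x, ~ universal e x) ->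
  cnbhd e w = ~: cnbhd e u -> gamma_pair e u w.
Proof.
move=> nuniv compl; split; [split | by rewrite compl setICr | by rewrite compl setUCr].
  apply/setP=> x; rewrite in_setT; apply/bigcupP.
  by case: (boolP (x \in cnbhd e u)) => xu; [exists u | exists w];
    rewrite ?compl ?in_setC // !inE eqxx ?orbT.
move=> D domD; apply: leq_trans (_ : 2 <= _); first by rewrite cards2; case: (u != w).
rewrite leqNgt; apply/negP=> smallD.
have /bigcupP[x Dx _] : u \in \bigcup_(x in D) cnbhd e x by rewrite domD in_setT.
have D1 : D = [set x] by apply/eqP; rewrite eq_sym eqEcard sub1set Dx cards1.
by apply: (nuniv x); apply/universalP; rewrite -domD D1 big_set1.
Qed.

Lemma exists_edge : connected_graph e -> 1 < #|T| -> exists g g', e g g'.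
Proof.
move=> conn /card_gt1P[x [y [_ _ xy]]]; have /connectP[[|z p] /= xp yp] := conn x y.
  by rewrite yp eqxx in xy.
by case/andP: xp => xz _; exists x, z.
Qed.

Lemma exists_non_edge : ~ complete_graph e -> exists g g', g' \notin cnbhd e g.
Proof.
move=> ncompl; case: (pickP [pred gg : T * T | gg.2 \notin cnbhd e gg.1]) => [[g g'] ?|compl].
  by exists g, g'.
case: ncompl => x y xy; move/negbFE: (compl (x, y)).
by rewrite !inE eq_sym (negbTE xy).
Qed.

Hypothesis esym : symmetric e.

Lemma gamma_pair_no_universal h h' u : gamma_pair e h h' -> ~ universal e u.
Proof.
move=> /gamma_pair_cnbhdC compl /universalP full.
have : u \in cnbhd e h' by rewrite mem_cnbhdC // full inE.
by rewrite compl inE mem_cnbhdC // full inE.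
Qed.

End Neighbourhoods.

Lemma exists_mem_eq (T : finType) (A B : {set T}) :
  B != ~: A -> exists x, (x \in A) = (x \in B).
Proof.
move=> BA; case: (pickP [pred x | (x \in A) == (x \in B)]) => [x /eqP|diff]; first by exists x.
case/negP: BA; apply/eqP/setP=> x; move/negbT: (diff x).
by rewrite !inE; case: (x \in A); case: (x \in B).
Qed.

(* Read x |-> ([x \in A], [x \in B]) as a pattern in bool * bool.  On each side
   some pattern is diagonal, some has first bit true and some has second bit
   false; two such sets of patterns always intersect. *)
Lemma exists_common_pattern_half (T1 T2 : finType)
    (A1 B1 : {set T1}) (A2 B2 : {set T2}) x1 x2 :
  x1 \in A1 :&: B1 -> x2 \notin A2 :|: B2 ->
  (exists y1, y1 \notin B1) -> (exists y2, y2 \in A2) ->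
  exists y1 y2, ((y1 \in A1) == (y2 \in A2)) && ((y1 \in B1) == (y2 \in B2)).
Proof.
rewrite inE in_setU negb_or => /andP[x1A x1B] /andP[/negbTE x2A /negbTE x2B] [y1 y1B] [y2 y2A].
have [y1A|/negbTE y1A] := boolP (y1 \in A1); last first.
  by exists y1, x2; rewrite x2A x2B y1A (negbTE y1B).
have [y2B|/negbTE y2B] := boolP (y2 \in B2); first by exists x1, y2; rewrite x1A x1B y2A y2B.
by exists y1, y2; rewrite y1A y2A (negbTE y1B) y2B.
Qed.

Lemma exists_common_pattern (T1 T2 : finType) (A1 B1 : {set T1}) (A2 B2 : {set T2}) :
  (exists x1, (x1 \in A1) = (x1 \in B1)) -> (exists y1, y1 \in A1) -> (exists y1, y1 \notin B1) ->
  (exists x2, (x2 \in A2) = (x2 \in B2)) -> (exists y2, y2 \in A2) -> (exists y2, y2 \notin B2) ->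
  exists y1 y2, ((y1 \in A1) == (y2 \in A2)) && ((y1 \in B1) == (y2 \in B2)).
Proof.
move=> [x1 x1AB] inA1 outB1 [x2 x2AB] inA2 outB2.
have [x1A|x1A] := boolP (x1 \in A1); have [x2A|x2A] := boolP (x2 \in A2).
- by exists x1, x2; rewrite -x1AB -x2AB x1A x2A.
- apply: (exists_common_pattern_half (x1 := x1) (x2 := x2)) outB1 inA2.
    by rewrite inE -x1AB x1A.
  by rewrite inE -x2AB orbb.
- have x2AB2 : x2 \in A2 :&: B2 by rewrite inE -x2AB x2A.
  have x1AB1 : x1 \notin A1 :|: B1 by rewrite inE -x1AB orbb.
  have [y2 [y1 pat]] := exists_common_pattern_half x2AB2 x1AB1 outB2 inA1.
  by exists y1, y2; rewrite eq_sym (eq_sym (y1 \in B1)).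
- by exists x1, x2; rewrite -x1AB -x2AB (negbTE x1A) (negbTE x2A).
Qed.

Section ModularProduct.
Variables (T1 T2 : finType) (e1 : rel T1) (e2 : rel T2).
Hypotheses (simple1 : simple_graph e1) (simple2 : simple_graph e2).
Local Notation P := (modprod e1 e2).

Lemma mem_cnbhd_modprod a b x y :
  ((x, y) \in cnbhd P (a, b)) = ((x \in cnbhd e1 a) == (y \in cnbhd e2 b)).
Proof.
case: simple1 simple2 => [_ irr1] [_ irr2]; rewrite !inE /modprod xpair_eqE (eq_sym x) (eq_sym y).
case: (eqVneq a x) => [<-|_]; case: (eqVneq b y) => [<-|_]; rewrite ?irr1 ?irr2 /=;
  by case: (e1 a x); case: (e2 b y).
Qed.

Lemma modprod_sym : symmetric P.
Proof.
case: simple1 simple2 => [sym1 _] [sym2 _] [a b] [x y].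
by rewrite /modprod (sym1 a x) (sym2 b y) (eq_sym a x) (eq_sym b y).
Qed.

Lemma modprod_cnbhd_disjoint a b c d :
  (forall x y, (x \in cnbhd e1 a) == (y \in cnbhd e2 b) ->
               (x \in cnbhd e1 c) == (y \in cnbhd e2 d) -> False) ->
  cnbhd P (a, b) :&: cnbhd P (c, d) = set0.
Proof.
move=> incompatible; apply/setP=> -[x y]; rewrite inE in_set0 !mem_cnbhd_modprod.
by apply/negP=> /andP[]; apply: incompatible.
Qed.

Lemma modprod_cnbhd_disjoint_complr a b c d :
  cnbhd e1 c = cnbhd e1 a -> cnbhd e2 d = ~: cnbhd e2 b ->
  cnbhd P (a, b) :&: cnbhd P (c, d) = set0.
Proof.
move=> ca db; apply: modprod_cnbhd_disjoint => x y; rewrite ca db in_setC => /eqP->.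
by case: (y \in cnbhd e2 b).
Qed.

Lemma modprod_cnbhd_disjoint_compll a b c d :
  cnbhd e1 c = ~: cnbhd e1 a -> cnbhd e2 d = cnbhd e2 b ->
  cnbhd P (a, b) :&: cnbhd P (c, d) = set0.
Proof.
move=> ca db; apply: modprod_cnbhd_disjoint => x y; rewrite ca db in_setC => /eqP->.
by case: (y \in cnbhd e2 b).
Qed.

Lemma modprod_cnbhd_disjoint_universal a b c d :
  cnbhd e1 a = [set: T1] -> cnbhd e1 c = [set: T1] ->
  cnbhd e2 b :&: cnbhd e2 d = set0 -> cnbhd P (a, b) :&: cnbhd P (c, d) = set0.
Proof.
move=> a1 c1 disj; apply: modprod_cnbhd_disjoint => x y; rewrite a1 c1 in_setT.
by move=> /eqP/esym yb /eqP/esym yd; have := in_set0 y; rewrite -disj inE yb yd.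
Qed.

Lemma modprod_cnbhd_meet c d w1 w2 :
  cnbhd e1 w1 != ~: cnbhd e1 c -> ~ universal e1 w1 ->
  cnbhd e2 w2 != ~: cnbhd e2 d -> ~ universal e2 w2 ->
  cnbhd P (c, d) :&: cnbhd P (w1, w2) != set0.
Proof.
move=> /exists_mem_eq diag1 /universalPn out1 /exists_mem_eq diag2 /universalPn out2.
have [x1 [x2 pat]] := exists_common_pattern diag1 (ex_intro _ c (cnbhd_refl e1 c)) out1
  diag2 (ex_intro _ d (cnbhd_refl e2 d)) out2.
by apply/set0Pn; exists (x1, x2); rewrite inE !mem_cnbhd_modprod.
Qed.

End ModularProduct.

Section ModularProductGame.
Variables (T1 T2 : finType) (e1 : rel T1) (e2 : rel T2).
Hypotheses (simple1 : simple_graph e1) (simple2 : simple_graph e2).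
Hypotheses (card1 : 1 < #|T1|) (card2 : 1 < #|T2|).
Local Notation P := (modprod e1 e2).
Hypothesis diamP : diam P <= 3.
Local Notation eccentric := (mutually_eccentric P).

Let sym1 : symmetric e1. Proof. by case: simple1. Qed.
Let sym2 : symmetric e2. Proof. by case: simple2. Qed.
Let symP : symmetric P. Proof. exact: modprod_sym. Qed.

Lemma card_modprod_gt3 : 3 < #|{: T1 * T2}|.
Proof. by rewrite card_prod; nia. Qed.

Lemma modprod_eccentric_of_disjoint a b c d :
  cnbhd P (a, b) :&: cnbhd P (c, d) = set0 -> eccentric (a, b) (c, d).
Proof. by apply: mutually_eccentric_of_disjoint => //; apply: ltnW card_modprod_gt3. Qed.

Lemma outcome_modprod_gamma_pairs g g' h h' :
  gamma_pair e1 g g' -> gamma_pair e2 h h' -> outcome_SR_B P.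
Proof.
move=> gg' hh'; have ng := gamma_pair_neq gg'.
have [g'g h'h] := (gamma_pair_cnbhdC gg', gamma_pair_cnbhdC hh').
have gg'C : cnbhd e1 g = ~: cnbhd e1 g' by rewrite g'g setCK.
have hh'C : cnbhd e2 h = ~: cnbhd e2 h' by rewrite h'h setCK.
apply: (outcome_SR_B_of_eccentric_cycle (a := (g, h)) (b := (g, h')) (c := (g', h')) (d := (g', h)));
  rewrite ?xpair_eqE ?(negbTE ng) //; apply: modprod_eccentric_of_disjoint.
- exact: modprod_cnbhd_disjoint_complr.
- exact: modprod_cnbhd_disjoint_compll.
- exact: modprod_cnbhd_disjoint_complr.
- exact: modprod_cnbhd_disjoint_compll.
Qed.

Lemma outcome_modprod_universal_pair u1 u2 :
  u1 != u2 -> universal e1 u1 -> universal e1 u2 -> 3 <= diam e2 -> outcome_SR_B P.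
Proof.
move=> u12 /universalP U1 /universalP U2 /(exists_disjoint_cnbhd sym2)[h [h' hh']].
have h'h : cnbhd e2 h' :&: cnbhd e2 h = set0 by rewrite setIC.
apply: (outcome_SR_B_of_eccentric_cycle (a := (u1, h)) (b := (u1, h')) (c := (u2, h)) (d := (u2, h')));
  rewrite ?xpair_eqE ?(negbTE u12) //; apply: modprod_eccentric_of_disjoint;
  exact: modprod_cnbhd_disjoint_universal.
Qed.

Lemma outcome_modprod_twins_gamma_pair g1 g2 h h' :
  adjacent_twins e1 g1 g2 -> gamma_pair e2 h h' -> outcome_SR_B P.
Proof.
move=> [g12 g21] /gamma_pair_cnbhdC h'h.
have hh' : cnbhd e2 h = ~: cnbhd e2 h' by rewrite h'h setCK.
apply: (outcome_SR_B_of_eccentric_cycle (a := (g1, h)) (b := (g1, h')) (c := (g2, h)) (d := (g2, h')));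
  rewrite ?xpair_eqE ?(negbTE g12) //; apply: modprod_eccentric_of_disjoint;
  exact: modprod_cnbhd_disjoint_complr.
Qed.

Lemma outcome_modprod_non_gamma x y h h' :
  connected_graph e1 -> ~ complete_graph e1 ->
  (forall g g', ~ gamma_pair e1 g g') -> (forall u, ~ universal e1 u) ->
  gamma_pair e2 h h' -> x != y ->
  (forall z, ~ gamma_pair e2 x z) -> (forall z, ~ gamma_pair e2 y z) -> outcome_SR_B P.
Proof.
move=> conn1 ncompl1 noG1 noU1 hh' xy xfree yfree.
have noU2 := gamma_pair_no_universal sym2 hh'.
have close c d : (forall z, ~ gamma_pair e2 d z) ->
    forall w, cnbhd P (c, d) :&: cnbhd P w != set0.
  move=> dfree [w1 w2]; apply: modprod_cnbhd_meet (noU1 w1) _ (noU2 w2) => //; apply/eqP.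
    by move/(gamma_pair_of_cnbhdC noU1); apply: noG1.
  by move/(gamma_pair_of_cnbhdC noU2); apply: dfree.
have ecc a b c d : (forall z, ~ gamma_pair e2 b z) -> (forall z, ~ gamma_pair e2 d z) ->
    (c \in cnbhd e1 a) != (d \in cnbhd e2 b) -> eccentric (a, b) (c, d).
  move=> bfree dfree nadj; apply: mutually_eccentric_of_nonadjacent; rewrite ?mem_cnbhd_modprod //.
  - exact: close.
  - exact: close.
have [x_y|/negbTE x_y] := boolP (y \in cnbhd e2 x); have y_x := x_y; rewrite (mem_cnbhdC sym2) in y_x.
- have [g [g' /negbTE g_g']] := exists_non_edge ncompl1.
  have g'_g := g_g'; rewrite (mem_cnbhdC sym1) in g'_g.
  apply: (outcome_SR_B_of_eccentric_cycle (a := (g, x)) (b := (g', x)) (c := (g, y)) (d := (g', y)));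
    rewrite ?xpair_eqE ?(negbTE xy) ?andbF //; apply: ecc;
    by rewrite // ?g_g' ?g'_g ?x_y ?y_x ?cnbhd_refl.
- have [g [g' gg']] := exists_edge conn1 card1.
  have g_g' : g' \in cnbhd e1 g by rewrite !inE gg' orbT.
  have g'_g := g_g'; rewrite (mem_cnbhdC sym1) in g'_g.
  have ng : g != g' by apply: contraTneq gg' => ->; case: simple1 => _ ->.
  apply: (outcome_SR_B_of_eccentric_cycle (a := (g, x)) (b := (g, y)) (c := (g', x)) (d := (g', y)));
    rewrite ?xpair_eqE ?(negbTE ng) //; apply: ecc;
    by rewrite // ?g_g' ?g'_g ?x_y ?y_x ?cnbhd_refl.
Qed.

Lemma outcome_modprod_gamma_fork h1 h2 h :
  h1 != h2 -> gamma_pair e2 h1 h -> gamma_pair e2 h2 h -> outcome_SR_B P.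
Proof.
move=> h12 /gamma_pair_cnbhdC hh1 /gamma_pair_cnbhdC hh2.
apply: outcome_SR_B_of_forks => [|[v1 v2]]; first by apply: leq_trans card_modprod_gt3.
have [g0 v1g0] : exists g0, (v1 == g0) = false.
  case/card_gt1P: card1 => g [g' [_ _ gg']].
  by case: (eqVneq v1 g) => [->|]; [exists g'; apply/negbTE | exists g; apply/negbTE].
exists (g0, h), (g0, h1), (g0, h2); split; last by rewrite !inE !xpair_eqE v1g0.
- by apply/mutually_eccentricC/modprod_eccentric_of_disjoint/modprod_cnbhd_disjoint_complr.
- by apply/mutually_eccentricC/modprod_eccentric_of_disjoint/modprod_cnbhd_disjoint_complr.
- by rewrite xpair_eqE (negbTE h12) andbF.
Qed.

End ModularProductGame.

Unset Implicit Arguments.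

Theorem mainTheorem18 (T1 T2 : finType) (e1 : rel T1) (e2 : rel T2) :
  simple_graph e1 -> simple_graph e2 ->
  connected_graph e1 -> connected_graph e2 ->
  1 < #|T1| -> 1 < #|T2| ->
  ~ complete_graph e1 -> ~ complete_graph e2 ->
  diam (modprod e1 e2) = 3 ->
  (* (a) *)
  ((exists g g' : T1, gamma_pair e1 g g') ->
   (exists h h' : T2, gamma_pair e2 h h') ->
   outcome_SR_B (modprod e1 e2)) /\
  (* (b) *)
  ((exists u1 u2 : T1, [/\ u1 != u2, universal e1 u1 & universal e1 u2]) ->
   3 <= diam e2 ->
   outcome_SR_B (modprod e1 e2)) /\
  (* (c) *)
  ((forall g g' : T1, ~ gamma_pair e1 g g') ->
   (forall u : T1, ~ universal e1 u) ->
   (exists g1 g2 : T1, adjacent_twins e1 g1 g2) ->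
   (exists h h' : T2, gamma_pair e2 h h') ->
   outcome_SR_B (modprod e1 e2)) /\
  (* (d) *)
  ((forall g g' : T1, ~ gamma_pair e1 g g') ->
   (forall u : T1, ~ universal e1 u) ->
   (exists h h' : T2, gamma_pair e2 h h') ->
   (exists x y : T2, [/\ x != y,
      forall z, ~ gamma_pair e2 x z /\ ~ gamma_pair e2 z x &
      forall z, ~ gamma_pair e2 y z /\ ~ gamma_pair e2 z y]) ->
   outcome_SR_B (modprod e1 e2)) /\
  (* (e) *)
  ((forall g g' : T1, ~ gamma_pair e1 g g') ->
   (forall u : T1, ~ universal e1 u) ->
   (exists h1 h2 h : T2, [/\ adjacent_twins e2 h1 h2, h != h1, h != h2,
      gamma_pair e2 h1 h & gamma_pair e2 h2 h]) ->
   outcome_SR_B (modprod e1 e2)).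
Proof.
move=> simple1 simple2 conn1 _ card1 card2 ncompl1 _ diam3.
have diamP : diam (modprod e1 e2) <= 3 by rewrite diam3.
split; [|split; [|split; [|split]]].
- move=> [g [g' gg']] [h [h' hh']].
  exact: (outcome_modprod_gamma_pairs simple1 simple2 card1 card2 diamP gg' hh').
- move=> [u1 [u2 [u12 U1 U2]]].
  exact: (outcome_modprod_universal_pair simple1 simple2 card1 card2 diamP u12 U1 U2).
- move=> _ _ [g1 [g2 twins]] [h [h' hh']].
  exact: (outcome_modprod_twins_gamma_pair simple1 simple2 card1 card2 diamP twins hh').
- move=> noG1 noU1 [h [h' hh']] [x [y [xy xfree yfree]]].
  apply: (outcome_modprod_non_gamma simple1 simple2 card1 conn1 ncompl1 noG1 noU1 hh' xy) => z.
  + by case: (xfree z).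
  + by case: (yfree z).
- move=> _ _ [h1 [h2 [h [[h12 _] _ _ hh1 hh2]]]].
  exact: (outcome_modprod_gamma_fork simple1 simple2 card1 card2 diamP h12 hh1 hh2).
Qed.
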